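(* There are at least $2^{\mathfrak d}$ many totally imperfect Menger subsets of $2^\omega$.
   Context: $\mathfrak d$ is the least size of a dominating family in $(\omega^\omega,\le^* )$, where $a\le^*b$ means $\{n:a(n)>b(n)\}$ is finite. Menger: for every sequence $(\mathcal U_n)$ of open covers there are finite $\mathcal F_n\subseteq\mathcal U_n$ with $\bigcup_n\mathcal F_n$ a cover. Totally imperfect: contains no homeomorphic copy of $2^\omega$. *)

From HB Require Import structures.
From mathcomp Require Import all_boot all_order all_algebra.
From mathcomp Require Import all_classical all_reals all_analysis.
Set Implicit Arguments. Unset Strict Implicit. Unset Printing Implicit Defensive.
Local Open Scope classical_set_scope.

Definition le_star (a b : nat -> nat) : Prop := finite_set [set n | (b n < a n)%N].

Definition dominating (D : set (nat -> nat)) : Prop :=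
  forall f : nat -> nat, exists2 g, D g & le_star f g.

(* D is a dominating family of least size, i.e. |D| = d *)
Definition min_dominating (D : set (nat -> nat)) : Prop :=
  dominating D /\ forall D', dominating D' -> (D #<= D')%card.

Definition Menger (X : set cantor_space) : Prop :=
  forall U : nat -> set (set cantor_space),
    (forall n, (forall V, U n V -> open V) /\ X `<=` \bigcup_(V in U n) V) ->
    exists F : nat -> set (set cantor_space),
      (forall n, finite_set (F n) /\ F n `<=` U n) /\
      X `<=` \bigcup_n \bigcup_(V in F n) V.

(* X contains a homeomorphic copy of 2^omega: an embedding f of 2^omega
   (continuous, with continuous inverse on its image) whose image lies in X *)
Definition contains_cantor_copy (X : set cantor_space) : Prop :=
  exists (f g : cantor_space -> cantor_space),
    continuous f /\ cancel f g /\ {within range f, continuous g} /\ range f `<=` X.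

Definition totally_imperfect (X : set cantor_space) : Prop :=
  ~ contains_cantor_copy X.

From HB Require Import structures.
From mathcomp Require Import all_boot all_order all_algebra.
From mathcomp Require Import all_classical all_reals all_analysis.
From mathcomp Require Import wochoice finmap.
Local Open Scope classical_set_scope.

(* Well-order a dominating family [D] of size [d] in order type [d] and pick, for each
   [d] in [D], a function [h d] escaping [d] and all its predecessors: any
   [<=*]-bounded set of the [h d] has then fewer than [d] elements.  Coding [h d]
   (interleaved with [d], for injectivity) as the 0-1 sequence whose gaps between
   ones have lengths [h d] gives points [y d] outside [Fin] of which fewer than [d]
   have all their gaps bounded by any given [G].  For [A] included in [D], the set
   [Fin `|` y @` A] is Menger: countably many finite families of open sets covering
   [Fin] leave uncovered only points with bounded gaps, a set smaller than [d], and
   sets smaller than [d] are Menger.  It is totally imperfect: a copy of [2^omega]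
   in it would contain a compact copy avoiding [Fin], whose points all have their
   gaps bounded by a single [G]. *)

Lemma injective_card_le T U (A : set T) (B : set U) (f : T -> U) :
  {in A &, injective f} -> (forall a, A a -> B (f a)) -> (A #<= B)%card.
Proof.
move=> f_inj fAB; have /card_eqPle [_ Af] := inj_card_eq f_inj.
by apply: (card_le_trans Af); apply: subset_card_le => _ [a Aa <-]; exact: fAB.
Qed.

Lemma exists_small_segment_order (T : pointedType) (D : set T) :
  exists lt : T -> T -> Prop,
    (forall a b, D a -> D b -> [\/ lt a b, a = b | lt b a]) /\
    (forall a, D a -> ~ (D #<= [set b | D b /\ lt b a])%card).
Proof.
have [R wR] := well_ordering_principle T.
have R_total : total R.
  by move=> a b; apply: (@wo_chainW T R predT (fun A _ => wR A)).
have R_anti : antisymmetric R.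
  by move=> a b; apply: (@wo_chain_antisymmetric T R predT (fun A _ => wR A)).
pose seg a := [set b | D b /\ R b a /\ b <> a].
pose I := [set a | D a /\ ~ (D #<= seg a)%card].
(* If some segment is as large as [D], that of the least such [z] lies inside [I]. *)
have DI : (D #<= I)%card.
  pose big := [pred a | `[< D a /\ (D #<= seg a)%card >]].
  have [[a0 big_a0]|no_big] := pselect (nonempty big); last first.
    apply: subset_card_le => a Da; split => // Dsega; apply: no_big; exists a.
    by rewrite inE; apply/asboolP.
  have [z [[/asboolP [Dz Dsegz] z_least] _]] := wR _ (ex_intro _ a0 big_a0).
  apply: (card_le_trans Dsegz); apply: subset_card_le => b [Db [Rbz bz]].
  split => // Dsegb; apply: bz; apply: R_anti; rewrite Rbz z_least //.
  by rewrite inE; apply/asboolP.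
have /pcard_leP/injfunPex [iota iota_fun iota_inj] := DI.
exists (fun a b => R (iota a) (iota b) /\ iota a <> iota b); split.
  move=> a b Da Db; have [eab|nab] := pselect (iota a = iota b).
    by apply: Or32; apply: iota_inj => //; apply: mem_set.
  case/orP: (R_total (iota a) (iota b)) => R_ab; [apply: Or31 | apply: Or33].
    by split.
  by split => // eab; apply: nab.
move=> a Da Dsega; have [_ Iseg] := iota_fun a Da; apply: Iseg.
apply: (card_le_trans Dsega); apply: (@injective_card_le _ _ _ _ iota).
  by move=> b c /set_mem [Db _] /set_mem [Dc _]; apply: iota_inj; apply: mem_set.
by move=> b [Db Rba]; have [Diotab _] := iota_fun b Db; split.
Qed.

Lemma le_star_trans {a b c} : le_star a b -> le_star b c -> le_star a c.
Proof.
move=> ab bc; rewrite /le_star.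
apply: (@sub_finite_set _ _ ([set n | (b n < a n)%N] `|` [set n | (c n < b n)%N])).
  move=> n /= lt_ca.
  by have [lt_ba|le_ab] := ltnP (b n) (a n); [left | right; exact: leq_trans lt_ca le_ab].
by rewrite finite_setU.
Qed.

Lemma leq_le_star a b : (forall n, a n <= b n)%N -> le_star a b.
Proof.
move=> le_ab; rewrite /le_star; suff -> : [set n | (b n < a n)%N] = set0 by [].
by apply/seteqP; split => // n /=; rewrite ltnNge le_ab.
Qed.

Lemma not_le_star_succ a : ~ le_star (fun n => (a n).+1) a.
Proof.
rewrite /le_star; suff -> : [set n | (a n < (a n).+1)%N] = setT by exact: infinite_nat.
by apply/seteqP; split => n //= _; rewrite ltnSn.
Qed.

Lemma not_le_star_gt {a b} : ~ le_star a b -> exists n, (b n < a n)%N.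
Proof.
move=> nab; apply: contrapT => none; apply: nab; rewrite /le_star.
suff -> : [set n | (b n < a n)%N] = set0 by [].
by apply/seteqP; split => // n ?; apply: none; exists n.
Qed.

Lemma small_not_dominating {D : set (nat -> nat)} {T} {Z : set T} (f : T -> nat -> nat) :
  (forall D', dominating D' -> (D #<= D')%card) -> ~ (D #<= Z)%card ->
  exists f0, forall z, Z z -> ~ le_star f0 (f z).
Proof.
move=> minD smallZ; apply: contrapT => unbounded; apply: smallZ.
apply: (card_le_trans _ (card_image_le f Z)); apply: minD => f1.
apply: contrapT => f1_undominated; apply: unbounded; exists f1 => z Zz f1z.
by apply: f1_undominated; exists (f z).
Qed.

Lemma exists_unbounded_family {D : set (nat -> nat)} : min_dominating D ->
  exists h : (nat -> nat) -> nat -> nat,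
    forall f, ~ (D #<= [set d | D d /\ le_star (h d) f])%card.
Proof.
move=> [domD minD]; have [lt [lt_total lt_small]] := exists_small_segment_order _ D.
have /choice [h0 h0_unbounded] : forall d, exists g : nat -> nat,
    D d -> forall e, D e -> lt e d -> ~ le_star g e.
  move=> d; have [Dd|nDd] := pselect (D d); last by exists id => /nDd.
  have [f0 f0_unbounded] := small_not_dominating id minD (lt_small d Dd).
  by exists f0 => _ e De lt_ed; apply: f0_unbounded.
exists (fun d n => maxn (h0 d n) (d n).+1) => f.
have [e De le_fe] := domD f.
apply: contra_not (lt_small e De) => DS; apply: (card_le_trans DS); apply: subset_card_le.
move=> d [Dd le_hf]; split => //.
have le_he := le_star_trans le_hf le_fe.
case: (lt_total d e Dd De) => // [de|lt_ed]; exfalso.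
  rewrite -de in le_he; apply: (not_le_star_succ d).
  by apply: le_star_trans le_he; apply: leq_le_star => n; exact: leq_maxr.
apply: (h0_unbounded d Dd e De lt_ed).
by apply: le_star_trans le_he; apply: leq_le_star => n; exact: leq_maxl.
Qed.

Lemma increasing_mono {a : nat -> nat} :
  (forall i, a i < a i.+1)%N -> {mono a : m n / (m <= n)%N}.
Proof. by move=> aS; apply: leq_mono; exact: (homo_ltn ltn_trans aS). Qed.

Lemma increasing_range_eq (a b : nat -> nat) :
  (forall i, a i < a i.+1)%N -> (forall i, b i < b i.+1)%N ->
  (forall m, (exists n, a n = m) <-> (exists n, b n = m)) -> a = b.
Proof.
move=> /increasing_mono a_mono /increasing_mono b_mono range_ab.
have a_inj := incn_inj a_mono; have b_inj := incn_inj b_mono.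
have a_lt := leqW_mono a_mono; have b_lt := leqW_mono b_mono.
apply: funext => n; elim/ltn_ind: n => n IH.
have [p bp] := (range_ab (a n)).1 (ex_intro _ n erefl).
case: (ltngtP p n) => [lt_pn|lt_np|pn]; last by rewrite -bp pn.
  have /a_inj pn : a p = a n by rewrite IH.
  by move: lt_pn; rewrite pn ltnn.
have [q aq] := (range_ab (b n)).2 (ex_intro _ n erefl).
have lt_qn : (q < n)%N by rewrite -a_lt aq -bp b_lt.
have /b_inj qn : b q = b n by rewrite -IH.
by move: lt_qn; rewrite qn ltnn.
Qed.

Definition Fin : set cantor_space :=
  [set x | exists N, forall m, (N <= m)%N -> x m = false].

Definition bounded_gaps (G : nat -> nat) : set cantor_space :=
  [set x | forall k, exists j, (k <= j <= G k)%N /\ x j].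

Lemma bounded_gaps_notFin {G x} : bounded_gaps G x -> ~ Fin x.
Proof. by move=> Gx [N xN]; have [j [/andP [Nj _]]] := Gx N; rewrite xN. Qed.

(* [gap_code h] has its ones exactly at the positions [gap_code_pos h n]:
   it starts with [h 0] zeros and its [n]-th block of zeros has length [h n]. *)
Fixpoint gap_code_pos (h : nat -> nat) n :=
  if n is n'.+1 then (gap_code_pos h n' + h n).+1 else h 0.

Definition gap_code (h : nat -> nat) : cantor_space :=
  fun m => `[< exists n, gap_code_pos h n = m >].

Lemma gap_code_posS h n : (gap_code_pos h n < gap_code_pos h n.+1)%N.
Proof. by rewrite /= ltnS leq_addr. Qed.

Lemma gap_code_pos_ge h n : (h n <= gap_code_pos h n)%N.
Proof. by case: n => //= n; rewrite ltnW // ltnS leq_addl. Qed.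

Lemma gap_code_inj : injective gap_code.
Proof.
move=> h h' E.
have E_pos : gap_code_pos h = gap_code_pos h'.
  apply: increasing_range_eq; [exact: gap_code_posS | exact: gap_code_posS |] => m.
  exact: asbool_eq_equiv (congr1 (fun x : cantor_space => x m) E).
apply: funext => -[|n]; first exact: (congr1 (fun f => f 0%N) E_pos).
have := congr1 (fun f => f n.+1) E_pos; rewrite /= (congr1 (fun f => f n) E_pos).
by move=> [/addnI].
Qed.

Lemma gap_code_notFin h : ~ Fin (gap_code h).
Proof.
have pos_ge n : (n <= gap_code_pos h n)%N.
  by elim: n => // n IH; apply: leq_ltn_trans IH (gap_code_posS h n).
move=> [N xN]; have /negP[] : ~~ gap_code h (gap_code_pos h N) by rewrite xN.
by apply/asboolP; exists N.
Qed.

Fixpoint prefix_max (G : nat -> nat) k :=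
  if k is k'.+1 then maxn (prefix_max G k') (G k) else G 0.

Lemma prefix_max_ge G k : (G k <= prefix_max G k)%N.
Proof. by case: k => //= k; exact: leq_maxr. Qed.

Lemma prefix_max_homo G : {homo prefix_max G : m n / (m <= n)%N}.
Proof. by apply: homo_leq leqnn leq_trans _ => k; exact: leq_maxl. Qed.

Fixpoint gap_bound (G : nat -> nat) n :=
  if n is n'.+1 then prefix_max G (gap_bound G n').+1 else prefix_max G 0.

(* A [G]-window [k, G k] contains the next one of [gap_code h], so the [n]-th one
   is at most [gap_bound G n]. *)
Lemma bounded_gaps_code {G h} :
  bounded_gaps G (gap_code h) -> forall n, (h n <= gap_bound G n)%N.
Proof.
move=> Gh n; apply: leq_trans (gap_code_pos_ge h n) _.
have pos_mono := increasing_mono (gap_code_posS h).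
have pos_lt := leqW_mono pos_mono.
elim: n => [|n IH].
  have [j [/andP [_ jG] /asboolP [p pj]]] := Gh 0%N.
  by apply: leq_trans (prefix_max_ge G 0); apply: leq_trans jG; rewrite -pj pos_mono.
have [j [/andP [lt_j jG] /asboolP [p pj]]] := Gh (gap_code_pos h n).+1.
have lt_np : (n < p)%N by rewrite -pos_lt pj.
apply: (@leq_trans j); first by rewrite -pj pos_mono.
apply: leq_trans jG (leq_trans (prefix_max_ge G _) _).
by apply: prefix_max_homo; rewrite ltnS.
Qed.

(* [|X `&` bounded_gaps G| < |D|] for every [G]; the complement of [bounded_gaps G]
   is an open neighbourhood of [Fin], so this says that [X] is concentrated on
   [Fin] in a weak sense. *)
Definition concentrated (D : set (nat -> nat)) (X : set cantor_space) :=
  forall G, ~ (D #<= X `&` bounded_gaps G)%card.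

Lemma concentrated_sub {D X Y} : X `<=` Y -> concentrated D Y -> concentrated D X.
Proof.
move=> XY Yc G DX; apply: (Yc G); apply: (card_le_trans DX); apply: subset_card_le.
by move=> x [Xx Gx]; split => //; exact: XY.
Qed.

Lemma concentrated_FinU {D X} : concentrated D X -> concentrated D (Fin `|` X).
Proof.
move=> Xc G DX; apply: (Xc G); apply: (card_le_trans DX); apply: subset_card_le.
by move=> x [[Fx|Xx] Gx] //; case: (bounded_gaps_notFin Gx Fx).
Qed.

Definition interleave (a b : nat -> nat) n := if odd n then a n./2 else b n./2.

Lemma exists_concentrated_family {D : set (nat -> nat)} : min_dominating D ->
  exists y : (nat -> nat) -> cantor_space,
    [/\ injective y, forall d, ~ Fin (y d) & concentrated D (y @` D)].
Proof.
move=> minD; have [h h_unbounded] := exists_unbounded_family minD.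
exists (fun d => gap_code (interleave d (h d))); split.
- move=> d e /gap_code_inj de; apply: funext => n.
  by have := congr1 (fun f => f n.*2.+1) de; rewrite /interleave /= odd_double uphalf_double.
- by move=> d; exact: gap_code_notFin.
move=> G DG; apply: (h_unbounded (fun n => gap_bound G n.*2)).
apply: (card_le_trans DG); apply: card_le_trans (card_image_le _ _).
apply: subset_card_le => _ [[d Dd <-] Gd]; exists d => //; split => //.
apply: leq_le_star => n; have := bounded_gaps_code Gd n.*2.
by rewrite /interleave odd_double doubleK.
Qed.

Lemma open_coord (i : nat) (P : set bool) : open [set x : cantor_space | P (x i)].
Proof.
have -> : [set x : cantor_space | P (x i)] = (@proj nat (fun _ => bool) i) @^-1` P by [].
by apply: open_comp; [move=> + _; exact: proj_continuous | exact: discrete_open].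
Qed.

Lemma closed_coord (i : nat) (P : set bool) : closed [set x : cantor_space | P (x i)].
Proof. by rewrite -openC; exact: (open_coord i (~` P)). Qed.

Lemma compact_increasing_cover (T : ptopologicalType) (K : set T) (W : nat -> set T) :
  compact K -> (forall N, open (W N)) -> (forall m n, (m <= n)%N -> W m `<=` W n) ->
  K `<=` \bigcup_N W N -> exists N, K `<=` W N.
Proof.
move=> cK W_open W_mono KW; rewrite compact_cover in cK.
have [D' _ KD'] := cK nat setT W (fun N _ => W_open N) KW.
exists (\max_(j <- D') j) => x /KD' [i /= iD' Wix].
by apply: W_mono Wix; exact: (@leq_bigmax_seq _ _ xpredT (fun j => j)).
Qed.

Definition cylinder (s : seq bool) : set cantor_space :=
  [set x | forall i, (i < size s)%N -> x i = nth false s i].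

Definition pad0 (s : seq bool) : cantor_space := fun i => nth false s i.

Lemma cylinder_mkseq (z : cantor_space) L : cylinder (mkseq z L) z.
Proof. by move=> i; rewrite size_mkseq => iL; rewrite nth_mkseq. Qed.

Lemma pad0_Fin s : Fin (pad0 s).
Proof. by exists (size s) => m sm; rewrite /pad0 nth_default. Qed.

Lemma Fin_pad0 x : Fin x -> exists s, x = pad0 s.
Proof.
move=> [N xN]; exists (mkseq x N); apply: funext => i; rewrite /pad0.
have [iN|Ni] := ltnP i N; first by rewrite nth_mkseq.
by rewrite nth_default ?size_mkseq // xN.
Qed.

Lemma open_cylinder_nbhs {V : set cantor_space} {z} :
  open V -> V z -> exists L, cylinder (mkseq z L) `<=` V.
Proof.
move=> oV Vz.
have cK : compact (~` V).
  exact: subclosed_compact (open_closedC oV) cantor_space_compact (subsetT _).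
pose W N := \bigcup_(i in `I_N) [set x : cantor_space | x i != z i].
have [N VW] : exists N, ~` V `<=` W N.
  apply: compact_increasing_cover cK _ _ _.
  - by move=> N; apply: bigcup_open => i _; exact: (open_coord i (fun b => b != z i)).
  - by move=> m n mn x [i /= im xz]; exists i => //=; apply: leq_trans mn.
  - move=> x nVx; apply: contrapT => xz; apply: nVx.
    suff -> : x = z by [].
    apply: funext => i; apply/eqP; apply: contrapT => /negP xiz.
    by apply: xz; exists i.+1 => //; exists i => /=.
exists N => x xz; apply: contrapT => /VW [i /= iN].
by rewrite xz ?size_mkseq // nth_mkseq // eqxx.
Qed.

Lemma compact_bounded_gaps {K : set cantor_space} :
  compact K -> (forall x, K x -> ~ Fin x) -> exists G, K `<=` bounded_gaps G.
Proof.
move=> cK KnF.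
have /choice [G KG] : forall k, exists N : nat, K `<=`
    \bigcup_(j in [set j | (k <= j <= N)%N]) [set x : cantor_space | x j].
  move=> k; apply: compact_increasing_cover cK _ _ _.
  - by move=> N; apply: bigcup_open => j _; exact: (open_coord j id).
  - move=> m n mn x [j /= /andP [kj jm] xj]; exists j => //=.
    by rewrite kj (leq_trans jm mn).
  - move=> x Kx; apply: contrapT => nx; apply: (KnF x Kx); exists k => m km.
    apply: negbTE; apply/negP => xm; apply: nx; exists m => //; exists m => //=.
    by apply/andP; split.
by exists G => x Kx k; have [j /andP [kj jG] xj] := KG k x Kx; exists j; rewrite kj jG.
Qed.

(* Covers are refined through cylinders, which are coded by natural numbers; a set
   smaller than a dominating family cannot dominate these codes. *)
Lemma Menger_small {D : set (nat -> nat)} {Z : set cantor_space} :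
  (forall D', dominating D' -> (D #<= D')%card) -> ~ (D #<= Z)%card -> Menger Z.
Proof.
move=> minD smallZ U HU.
have /choice [W HW] : forall ns : nat * seq bool, exists V : set cantor_space,
    (exists2 V, U ns.1 V & cylinder ns.2 `<=` V) -> U ns.1 V /\ cylinder ns.2 `<=` V.
  move=> [n s]; have [[V UV sV]|nV] := pselect (exists2 V, U n V & cylinder s `<=` V).
    by exists V.
  by exists set0 => /nV.
have /choice [L HL] : forall nz : nat * cantor_space, exists L : nat,
    Z nz.2 -> exists2 V, U nz.1 V & cylinder (mkseq nz.2 L) `<=` V.
  move=> [n z]; have [Zz|nZz] := pselect (Z z); last by exists 0%N.
  have [V UV Vz] := (HU n).2 z Zz.
  have [L LV] := open_cylinder_nbhs ((HU n).1 V UV) Vz.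
  by exists L => _; exists V.
pose code z n := choice.pickle (mkseq z (L (n, z))).
have [f0 f0_unbounded] := small_not_dominating code minD smallZ.
pose S n := [set s | (choice.pickle s < f0 n)%N /\ exists2 V, U n V & cylinder s `<=` V].
exists (fun n => [set W (n, s) | s in S n]); split => [n|z Zz].
  split; last by move=> _ [s [_ Vs] <-]; exact: (HW (n, s) Vs).1.
  apply/finite_image/(card_le_finite _ (finite_II (f0 n))).
  apply: (@injective_card_le _ _ _ _ choice.pickle) => [s t _ _|s []] //.
  by move=> /(pcan_inj choice.pickleK).
have [n lt_code] := not_le_star_gt (f0_unbounded z Zz).
have Sz : S n (mkseq z (L (n, z))) by split => //; exact: (HL (n, z) Zz).
exists n => //; exists (W (n, mkseq z (L (n, z)))); first by exists (mkseq z (L (n, z))).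
by apply: (HW (n, _) Sz.2).2; exact: cylinder_mkseq.
Qed.

(* Choosing [F k] to cover every point that vanishes on the window
   [[ms k, ms k.+1)], the points left uncovered meet every such window. *)
Lemma Fin_gap_cover {U : nat -> set (set cantor_space)} :
  (forall n V, U n V -> open V) -> (forall n, Fin `<=` \bigcup_(V in U n) V) ->
  exists (F : nat -> set (set cantor_space)) (G : nat -> nat),
    (forall n, finite_set (F n) /\ F n `<=` U n) /\
    ~` (\bigcup_n \bigcup_(V in F n) V) `<=` bounded_gaps G.
Proof.
move=> oU covU.
have /choice [VL HVL] : forall ns : nat * seq bool, exists VL : set cantor_space * nat,
    U ns.1 VL.1 /\ cylinder (mkseq (pad0 ns.2) VL.2) `<=` VL.1.
  move=> [n s]; have [V UV Vs] := covU n _ (pad0_Fin s).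
  by have [L LV] := open_cylinder_nbhs (oU n V UV) Vs; exists (V, L).
pose ell n m := \max_(t : m.-tuple bool) (VL (n, val t)).2.
pose fix ms k := if k is k'.+1 then maxn (ms k').+1 (ell k' (ms k')) else 0%N.
have ms_ge j : (j <= ms j)%N.
  by elim: j => // j IH; apply: leq_trans (leq_maxl (ms j).+1 _); rewrite ltnS.
pose F k := [set (VL (k, val t)).1 | t in [set: (ms k).-tuple bool]].
exists F, (fun j => ms j.+1); split.
  move=> n; split; first exact/finite_image/finite_finset.
  by move=> _ [t _ <-]; exact: (HVL (n, val t)).1.
have cover k x : (forall i, (ms k <= i < ms k.+1)%N -> x i = false) ->
    (\bigcup_(V in F k) V) x.
  move=> gap; have sz : size (mkseq x (ms k)) == ms k by rewrite size_mkseq.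
  exists (VL (k, mkseq x (ms k))).1; first by exists (Tuple sz).
  apply: (HVL (k, _)).2 => i; rewrite size_mkseq => iL; rewrite nth_mkseq // /pad0.
  have [ilt|ige] := ltnP i (ms k); first by rewrite nth_mkseq.
  rewrite nth_default ?size_mkseq //; apply: gap; rewrite ige /=.
  apply: leq_trans iL (leq_trans _ (leq_maxr (ms k).+1 _)).
  exact: (@leq_bigmax _ (fun t : (ms k).-tuple bool => (VL (k, val t)).2) (Tuple sz)).
move=> x ncov j; apply: contrapT => nwin; apply: ncov; exists j => //.
apply: cover => i /andP [i1 i2]; apply/negbTE/negP => xi; apply: nwin; exists i.
by rewrite (leq_trans (ms_ge j) i1) ltnW.
Qed.

Lemma Menger_concentrated (D : set (nat -> nat)) (X : set cantor_space) :
  (forall D', dominating D' -> (D #<= D')%card) ->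
  Fin `<=` X -> concentrated D X -> Menger X.
Proof.
move=> minD FinX Xc U HU; have oU n := (HU n).1.
have [F0 [G [HF0 gapG]]] := Fin_gap_cover oU (fun n => subset_trans FinX (HU n).2).
pose Z := X `\` \bigcup_n \bigcup_(V in F0 n) V.
have smallZ : ~ (D #<= Z)%card.
  apply: contra_not (Xc G) => DZ; apply: (card_le_trans DZ); apply: subset_card_le.
  by move=> x [Xx nx]; split => //; exact: gapG.
have [F1 [HF1 ZF1]] :=
  Menger_small minD smallZ U (fun n => conj (oU n) (fun x (Zx : Z x) => (HU n).2 x Zx.1)).
exists (fun n => F0 n `|` F1 n); split.
  move=> n; have [f0 s0] := HF0 n; have [f1 s1] := HF1 n.
  by split; [rewrite finite_setU | move=> V [/s0|/s1]].
move=> x Xx; have [[n _ [V F0V Vx]]|ncov] := pselect ((\bigcup_n \bigcup_(V in F0 n) V) x).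
  by exists n => //; exists V => //; left.
by have [n _ [V F1V Vx]] := ZF1 x (conj Xx ncov); exists n => //; exists V => //; right.
Qed.

Lemma compact_avoiding_seq (c : nat -> cantor_space) :
  exists K : set cantor_space,
    [/\ compact K, ([set: cantor_space] #<= K)%card & forall n, ~ K (c n)].
Proof.
pose K := [set b : cantor_space | forall n, b n.*2.+1 = ~~ c n n.*2.+1].
exists K; split.
- apply: (subclosed_compact _ cantor_space_compact) => //.
  have -> : K = \bigcap_(n in [set: nat]) [set b : cantor_space | b n.*2.+1 = ~~ c n n.*2.+1].
    by apply/seteqP; split => b Kb n => [_|]; apply: Kb.
  by apply: closed_bigI => n _; exact: (closed_coord n.*2.+1 (fun v => v = _)).
- pose psi (b : cantor_space) : cantor_space :=
    fun k => if odd k then ~~ c k./2 k else b k./2.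
  apply: (@injective_card_le _ _ _ _ psi) => [a b _ _ ab|b _ n].
    apply: funext => n.
    by have := congr1 (fun z : cantor_space => z n.*2) ab; rewrite /psi odd_double doubleK.
  by rewrite /psi /= odd_double /= uphalf_double.
- by move=> n /(_ n); case: (c n _).
Qed.

Lemma concentrated_totally_imperfect (D : set (nat -> nat)) (X : set cantor_space) :
  concentrated D X -> totally_imperfect X.
Proof.
move=> Xc [f [g [f_cont [fK [_ fX]]]]].
pose c n := g (pad0 (odflt [::] (choice.unpickle n))).
have [K [cK big_K Kc]] := compact_avoiding_seq c.
have fK_nFin : forall y, (f @` K) y -> ~ Fin y.
  move=> _ [b Kb <-] /Fin_pad0 [s fbs]; apply: (Kc (choice.pickle s)).
  by rewrite /c choice.pickleK /= -fbs fK.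
have [G KG] :=
  compact_bounded_gaps (continuous_compact (continuous_subspaceT f_cont) cK) fK_nFin.
apply: (Xc G); apply: (@card_le_trans _ _ _ [set: cantor_space]).
  by apply: (@injective_card_le _ _ _ _ gap_code) => // h h' _ _ /gap_code_inj.
apply: (card_le_trans big_K); apply: (@injective_card_le _ _ _ _ f) => [a b _ _|b Kb].
  exact: (can_inj fK).
by split; [apply: fX; exists b | apply: KG; exists b].
Qed.

Theorem mainTheorem10 (D : set (nat -> nat)) :
  min_dominating D ->
  ([set A : set (nat -> nat) | A `<=` D] #<=
     [set X : set cantor_space | totally_imperfect X /\ Menger X])%card.
Proof.
move=> minD; have [y [y_inj y_nFin yD_conc]] := exists_concentrated_family minD.
apply: (@injective_card_le _ _ _ _ (fun A => Fin `|` y @` A)) => [A B _ _ AB|A AD].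
  suff sub A' B' : Fin `|` y @` A' = Fin `|` y @` B' -> A' `<=` B'.
    by apply/seteqP; split; apply: sub.
  move=> {}AB a A'a; have : (Fin `|` y @` B') (y a) by rewrite -AB; right; exists a.
  by case=> [/y_nFin[] | [b B'b /y_inj <-]].
have XA_conc := concentrated_FinU (concentrated_sub (image_subset y AD) yD_conc).
split; first exact: concentrated_totally_imperfect XA_conc.
by apply: Menger_concentrated minD.2 _ XA_conc => x Fx; left.
Qed.
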